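(* Let $(S_n)_{n\ge0}$ be the random walk with two memory channels with memory parameter $p\in(7/8,1)$. Then $\operatorname{Var}(S_n)\sim n^2$ as $n\to\infty$, i.e. the walk is ballistic.
   Context: A random variable is $\mathrm{Rad}(q)$ if it equals $+1$ with probability $q$ and $-1$ with probability $1-q$. Random walk with two memory channels with parameter $p\in(0,1)$: $S_0=0$; $X_1,X_2$ are i.i.d. $\mathrm{Rad}(1/2)$; for each $n\ge 2$, let $U_{1,n+1},U_{2,n+1}$ be i.i.d. uniform on $\{1,\dots,n\}$ and $\alpha_{1,n+1},\alpha_{2,n+1}$ i.i.d. $\mathrm{Rad}(p)$, all mutually independent and independent of $X_1,\dots,X_n$ (and of all earlier draws); set $T_{n+1}=\alpha_{1,n+1}X_{U_{1,n+1}}+\alpha_{2,n+1}X_{U_{2,n+1}}$ and $X_{n+1}=\max(-1,\min(1,T_{n+1}))\in\{-1,0,1\}$. Then $S_n=X_1+\dots+X_n$. Here $\operatorname{Var}(S_n)\sim n^2$ means $\operatorname{Var}(S_n)$ grows at the order $n^2$ (the ratio $\operatorname{Var}(S_n)/n^2$ stays bounded away from $0$ and $\infty$). *)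

From Stdlib Require Import Reals List ZArith.
Import ListNotations.
Open Scope R_scope.

(* A finite discrete law: list of (outcome, probability mass) pairs
   (outcomes may repeat; masses add up). *)
Definition law (A : Type) := list (A * R).

Definition clamp (t : Z) : Z := Z.max (-1) (Z.min 1 t).

Definition rad_law (q : R) : law Z := [(1%Z, q); ((-1)%Z, 1 - q)].

(* One step of the two-channel memory walk: given the law of the path
   (X_1,...,X_n) (stored as the list [X_1; ...; X_n], n >= 2), produce the law
   of (X_1,...,X_{n+1}), where U_1,U_2 are i.i.d. uniform on {1,...,n}
   (list index u-1 ranges over 0..n-1), alpha_1,alpha_2 are i.i.d. Rad(p),
   all independent of each other and of the past, and
   X_{n+1} = clamp(alpha_1 X_{U_1} + alpha_2 X_{U_2}). *)
Definition step (p : R) (L : law (list Z)) : law (list Z) :=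
  flat_map (fun xq : list Z * R =>
    let (xs, q) := xq in
    let n := length xs in
    flat_map (fun u1 : nat =>
      flat_map (fun u2 : nat =>
        flat_map (fun ar1 : Z * R =>
          let (a1, r1) := ar1 in
          map (fun ar2 : Z * R =>
            let (a2, r2) := ar2 in
            (xs ++ [clamp (a1 * nth u1 xs 0 + a2 * nth u2 xs 0)%Z],
             q * / INR n * / INR n * r1 * r2))
            (rad_law p))
          (rad_law p))
        (seq 0 n))
      (seq 0 n))
    L.

Definition law2 : law (list Z) :=
  [([1%Z; 1%Z], 1/4); ([1%Z; (-1)%Z], 1/4);
   ([(-1)%Z; 1%Z], 1/4); ([(-1)%Z; (-1)%Z], 1/4)].

Definition walk_law (p : R) (n : nat) : law (list Z) :=
  match n with
  | O => [([], 1)]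
  | S O => [([1%Z], 1/2); ([(-1)%Z], 1/2)]
  | S (S k) => Nat.iter k (step p) law2
  end.

Definition Ssum (xs : list Z) : R := IZR (fold_right Z.add 0%Z xs).

Definition expect {A : Type} (L : law A) (f : A -> R) : R :=
  fold_right (fun (xq : A * R) acc => snd xq * f (fst xq) + acc) 0 L.

Definition VarS (p : R) (n : nat) : R :=
  expect (walk_law p n) (fun xs => Ssum xs ^ 2)
  - (expect (walk_law p n) Ssum) ^ 2.

From Stdlib Require Import Reals Lra Lia Psatz ZArith List.
Import ListNotations.
Open Scope R_scope.

(* Write q = 2p - 1, m = S_n / n and t for the fraction of nonzero steps.
   The next step is 1, -1 or 0 with probabilities that depend only on (m, t), and
   E[X_{n+1} | past] = q (2 - t) m.  The law is symmetric, so E S_n = 0, and |S_n| <= n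
   gives the upper bound.  For the lower bound take the Lyapunov function
   Phi_n = S_n^2 exp (- h (m, t)),  h (m, t) = a (m^2 + b (t - t_star)^2),  t_star = 2 - 1/q:
   for suitable a, b > 0 one gets E[Phi_{n+1} | past] >= (1 + 2/n - C/n^2) Phi_n for large n,
   so E Phi_n grows like n^2, and Phi_n <= S_n^2.  The choice of a needs t_star > 2/3,
   which is q > 3/4, i.e. p > 7/8. *)

Fixpoint lsum {A : Type} (l : list A) (g : A -> R) : R :=
  match l with [] => 0 | a :: l' => g a + lsum l' g end.

Lemma lsum_app {A : Type} (l1 l2 : list A) (g : A -> R) :
  lsum (l1 ++ l2) g = lsum l1 g + lsum l2 g.
Proof. induction l1 as [|a l1 IH]; simpl; [ring | rewrite IH; ring]. Qed.

Lemma lsum_flat_map {A B : Type} (l : list A) (h : A -> list B) (g : B -> R) :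
  lsum (flat_map h l) g = lsum l (fun a => lsum (h a) g).
Proof. induction l as [|a l IH]; simpl; [reflexivity | now rewrite lsum_app, IH]. Qed.

Lemma lsum_map {A B : Type} (l : list A) (h : A -> B) (g : B -> R) :
  lsum (map h l) g = lsum l (fun a => g (h a)).
Proof. induction l as [|a l IH]; simpl; [reflexivity | now rewrite IH]. Qed.

Lemma lsum_ext_in {A : Type} (l : list A) (g1 g2 : A -> R) :
  (forall a, In a l -> g1 a = g2 a) -> lsum l g1 = lsum l g2.
Proof. induction l as [|a l IH]; simpl; intros H; [reflexivity | rewrite H, IH; auto]. Qed.

Lemma lsum_le_in {A : Type} (l : list A) (g1 g2 : A -> R) :
  (forall a, In a l -> g1 a <= g2 a) -> lsum l g1 <= lsum l g2.
Proof.
  induction l as [|a l IH]; simpl; intros H; [lra|].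
  apply Rplus_le_compat; auto.
Qed.

Lemma lsum_scal_l {A : Type} (l : list A) (c : R) (g : A -> R) :
  lsum l (fun a => c * g a) = c * lsum l g.
Proof. induction l as [|a l IH]; simpl; [ring | rewrite IH; ring]. Qed.

Lemma lsum_nth (xs : list Z) (g : Z -> R) :
  lsum (seq 0 (length xs)) (fun u => g (nth u xs 0%Z)) = lsum xs g.
Proof.
  induction xs as [|x xs IH]; simpl; [reflexivity|].
  now rewrite <- seq_shift, lsum_map, IH.
Qed.

Lemma expect_lsum {A : Type} (L : law A) (f : A -> R) :
  expect L f = lsum L (fun xr => snd xr * f (fst xr)).
Proof. induction L as [|a L IH]; simpl; [reflexivity | now rewrite IH]. Qed.

Lemma expect_ext_in {A : Type} (L : law A) (f g : A -> R) :
  (forall x r, In (x, r) L -> f x = g x) -> expect L f = expect L g.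
Proof.
  intros H. rewrite !expect_lsum. apply lsum_ext_in.
  intros [x r] Hin. simpl. now rewrite (H x r Hin).
Qed.

Lemma expect_le_in {A : Type} (L : law A) (f g : A -> R) :
  (forall x r, In (x, r) L -> 0 <= r /\ f x <= g x) -> expect L f <= expect L g.
Proof.
  intros H. rewrite !expect_lsum. apply lsum_le_in.
  intros [x r] Hin. destruct (H x r Hin). simpl. now apply Rmult_le_compat_l.
Qed.

Lemma expect_scal_l {A : Type} (L : law A) (c : R) (f : A -> R) :
  expect L (fun x => c * f x) = c * expect L f.
Proof.
  rewrite !expect_lsum, <- lsum_scal_l. apply lsum_ext_in. intros; ring.
Qed.

Lemma expect_nonneg_in {A : Type} (L : law A) (f : A -> R) :
  (forall x r, In (x, r) L -> 0 <= r /\ 0 <= f x) -> 0 <= expect L f.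
Proof.
  induction L as [|[x r] L IH]; simpl; intros H; [lra|].
  destruct (H x r (or_introl eq_refl)).
  assert (0 <= expect L f) by (apply IH; auto).
  unfold expect in *. nra.
Qed.

Lemma expect_ge_atom {A : Type} (L : law A) (f : A -> R) (x0 : A) (r0 : R) :
  In (x0, r0) L -> (forall x r, In (x, r) L -> 0 <= r /\ 0 <= f x) ->
  r0 * f x0 <= expect L f.
Proof.
  induction L as [|[x r] L IH]; simpl; intros Hin H; [contradiction|].
  destruct (H x r (or_introl eq_refl)).
  assert (0 <= expect L f) by (apply expect_nonneg_in; auto).
  destruct Hin as [E | Hin].
  - injection E as -> ->. unfold expect in *. lra.
  - assert (r0 * f x0 <= expect L f) by (apply IH; auto).
    unfold expect in *. nra.
Qed.

Definition ternary (x : Z) : Prop := x = 1%Z \/ x = (-1)%Z \/ x = 0%Z.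

Definition path_sum (xs : list Z) : R := lsum xs IZR.
Definition path_sqsum (xs : list Z) : R := lsum xs (fun x => IZR x ^ 2).
Definition path_mean (xs : list Z) : R := path_sum xs / INR (length xs).
Definition path_density (xs : list Z) : R := path_sqsum xs / INR (length xs).

Lemma Ssum_path_sum (xs : list Z) : Ssum xs = path_sum xs.
Proof.
  unfold Ssum, path_sum. induction xs as [|x xs IH]; simpl; [reflexivity|].
  now rewrite plus_IZR, IH.
Qed.

Lemma path_sum_snoc (xs : list Z) (c : Z) : path_sum (xs ++ [c]) = path_sum xs + IZR c.
Proof. unfold path_sum. rewrite lsum_app. simpl. ring. Qed.

Lemma path_sqsum_snoc (xs : list Z) (c : Z) :
  path_sqsum (xs ++ [c]) = path_sqsum xs + IZR c ^ 2.
Proof. unfold path_sqsum. rewrite lsum_app. simpl. ring. Qed.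

Lemma path_mean_snoc (xs : list Z) (c : Z) : (1 <= length xs)%nat ->
  path_mean (xs ++ [c]) =
  path_mean xs + (IZR c - path_mean xs) / (INR (length xs) + 1).
Proof.
  intros Hl. assert (0 < INR (length xs)) by (apply lt_0_INR; lia).
  unfold path_mean. rewrite path_sum_snoc, length_app, plus_INR. simpl. field. lra.
Qed.

Lemma path_density_snoc (xs : list Z) (c : Z) : (1 <= length xs)%nat ->
  path_density (xs ++ [c]) =
  path_density xs + (IZR c ^ 2 - path_density xs) / (INR (length xs) + 1).
Proof.
  intros Hl. assert (0 < INR (length xs)) by (apply lt_0_INR; lia).
  unfold path_density. rewrite path_sqsum_snoc, length_app, plus_INR. simpl. field. lra.
Qed.

Lemma lsum_ternary (xs : list Z) (g : Z -> R) : Forall ternary xs ->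
  lsum xs g = (path_sqsum xs + path_sum xs) / 2 * g 1%Z
            + (path_sqsum xs - path_sum xs) / 2 * g (-1)%Z
            + (INR (length xs) - path_sqsum xs) * g 0%Z.
Proof.
  unfold path_sum, path_sqsum. induction xs as [|x xs IH]; intros H; [simpl; field|].
  inversion H as [|? ? Hx Hxs]; subst. cbn [lsum length]. rewrite S_INR, IH by exact Hxs.
  destruct Hx as [-> | [-> | ->]]; simpl; field.
Qed.

Lemma ternary_bounds (xs : list Z) : Forall ternary xs ->
  - path_sqsum xs <= path_sum xs <= path_sqsum xs /\
  0 <= path_sqsum xs <= INR (length xs).
Proof.
  unfold path_sum, path_sqsum. induction xs as [|x xs IH]; intros H; [simpl; lra|].
  inversion H as [|? ? Hx Hxs]; subst. specialize (IH Hxs). cbn [lsum length]. rewrite S_INR.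
  destruct Hx as [-> | [-> | ->]]; lra.
Qed.

Lemma path_stats_bounds (xs : list Z) : Forall ternary xs -> (1 <= length xs)%nat ->
  0 <= path_density xs <= 1 /\ - path_density xs <= path_mean xs <= path_density xs.
Proof.
  intros Hxs Hl. assert (HN : 0 < INR (length xs)) by (apply lt_0_INR; lia).
  destruct (ternary_bounds xs Hxs) as [HS HT].
  unfold path_mean, path_density.
  set (N := INR (length xs)) in *.
  assert (ES : path_sum xs = path_sum xs / N * N) by (field; lra).
  assert (ET : path_sqsum xs = path_sqsum xs / N * N) by (field; lra).
  set (m := path_sum xs / N) in *. set (t := path_sqsum xs / N) in *.
  rewrite ES, ET in *. repeat split; nra.
Qed.

Definition avg_signs (p : R) (f : list Z -> R) (xs : list Z) (y1 y2 : Z) : R :=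
  p * p * f (xs ++ [clamp (1 * y1 + 1 * y2)]) +
  p * (1 - p) * f (xs ++ [clamp (1 * y1 + -1 * y2)]) +
  (1 - p) * p * f (xs ++ [clamp (-1 * y1 + 1 * y2)]) +
  (1 - p) * (1 - p) * f (xs ++ [clamp (-1 * y1 + -1 * y2)]).

Definition step_kernel (p : R) (f : list Z -> R) (xs : list Z) : R :=
  / INR (length xs) * / INR (length xs) *
  lsum (seq 0 (length xs)) (fun u1 => lsum (seq 0 (length xs)) (fun u2 =>
    avg_signs p f xs (nth u1 xs 0%Z) (nth u2 xs 0%Z))).

Lemma expect_step (p : R) (L : law (list Z)) (f : list Z -> R) :
  expect (step p L) f = expect L (step_kernel p f).
Proof.
  rewrite !expect_lsum. unfold step. rewrite lsum_flat_map.
  apply lsum_ext_in. intros [xs q] _. simpl.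
  rewrite lsum_flat_map. unfold step_kernel. rewrite <- !lsum_scal_l.
  apply lsum_ext_in. intros u1 _.
  rewrite lsum_flat_map. rewrite <- !lsum_scal_l. apply lsum_ext_in. intros u2 _.
  unfold avg_signs. simpl. ring.
Qed.

Definition bias (p : R) : R := 2 * p - 1.

(* (t + q m)/2, (t - q m)/2 and 1 - t are the probabilities that alpha X_U is 1, -1, 0
   when m and t are the empirical mean and density of nonzero steps and q = E alpha;
   the clamped sum of two channels is 1 iff one is 1 and the other is not -1. *)
Definition prob_up (q m t : R) : R :=
  (t + q * m) / 2 * ((t + q * m) / 2 + 2 * (1 - t)).
Definition prob_down (q m t : R) : R :=
  (t - q * m) / 2 * ((t - q * m) / 2 + 2 * (1 - t)).
Definition prob_zero (q m t : R) : R :=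
  (1 - t) ^ 2 + 2 * ((t + q * m) / 2) * ((t - q * m) / 2).

Lemma prob_sum (q m t : R) : prob_up q m t + prob_down q m t + prob_zero q m t = 1.
Proof. unfold prob_up, prob_down, prob_zero. field. Qed.

Lemma prob_nonneg (q m t : R) : -1 <= q <= 1 -> 0 <= t <= 1 -> - t <= m <= t ->
  0 <= prob_up q m t /\ 0 <= prob_down q m t /\ 0 <= prob_zero q m t.
Proof.
  intros Hq Ht Hm.
  assert (0 <= t + q * m /\ 0 <= t - q * m) as [Hu Hv] by (split; nra).
  unfold prob_up, prob_down, prob_zero. repeat split; nra.
Qed.

Lemma prob_up_opp (q m t : R) : prob_up q (- m) t = prob_down q m t.
Proof. unfold prob_up, prob_down. now replace (t + q * - m) with (t - q * m) by ring. Qed.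

Lemma prob_down_opp (q m t : R) : prob_down q (- m) t = prob_up q m t.
Proof. unfold prob_up, prob_down. now replace (t - q * - m) with (t + q * m) by ring. Qed.

Lemma prob_zero_opp (q m t : R) : prob_zero q (- m) t = prob_zero q m t.
Proof. unfold prob_zero. field. Qed.

Lemma step_kernel_ternary (p : R) (f : list Z -> R) (xs : list Z) :
  Forall ternary xs -> (1 <= length xs)%nat ->
  step_kernel p f xs =
    prob_up (bias p) (path_mean xs) (path_density xs) * f (xs ++ [1%Z]) +
    prob_down (bias p) (path_mean xs) (path_density xs) * f (xs ++ [(-1)%Z]) +
    prob_zero (bias p) (path_mean xs) (path_density xs) * f (xs ++ [0%Z]).
Proof.
  intros Hxs Hl. assert (0 < INR (length xs)) by (apply lt_0_INR; lia).
  unfold step_kernel.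
  rewrite (lsum_ext_in _ _ (fun u1 => lsum xs (avg_signs p f xs (nth u1 xs 0%Z))))
    by (intros; apply lsum_nth).
  rewrite (lsum_nth xs (fun y1 => lsum xs (avg_signs p f xs y1))).
  rewrite lsum_ternary, !(lsum_ternary xs (avg_signs p f xs _)) by exact Hxs.
  unfold avg_signs.
  repeat match goal with |- context [clamp ?z] =>
    let v := eval compute in (clamp z) in change (clamp z) with v end.
  unfold prob_up, prob_down, prob_zero, path_mean, path_density, bias.
  field. lra.
Qed.

Lemma in_step_inv (p : R) (L : law (list Z)) (ys : list Z) (r : R) : In (ys, r) (step p L) ->
  exists xs q u1 u2 a1 r1 a2 r2, In (xs, q) L /\ In (a1, r1) (rad_law p) /\
    In (a2, r2) (rad_law p) /\
    ys = xs ++ [clamp (a1 * nth u1 xs 0 + a2 * nth u2 xs 0)]%Z /\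
    r = q * / INR (length xs) * / INR (length xs) * r1 * r2.
Proof.
  unfold step. intros H.
  apply in_flat_map in H as [[xs q] [Hin H]].
  apply in_flat_map in H as [u1 [_ H]].
  apply in_flat_map in H as [u2 [_ H]].
  apply in_flat_map in H as [[a1 r1] [H1 H]].
  apply in_map_iff in H as [[a2 r2] [E H2]].
  injection E as <- <-. exists xs, q, u1, u2, a1, r1, a2, r2. auto.
Qed.

Lemma in_step_intro (p : R) (L : law (list Z)) (xs : list Z) (q : R) (u1 u2 : nat)
    (a1 a2 : Z) (r1 r2 : R) :
  In (xs, q) L -> (u1 < length xs)%nat -> (u2 < length xs)%nat ->
  In (a1, r1) (rad_law p) -> In (a2, r2) (rad_law p) ->
  In (xs ++ [clamp (a1 * nth u1 xs 0 + a2 * nth u2 xs 0)]%Z,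
      q * / INR (length xs) * / INR (length xs) * r1 * r2) (step p L).
Proof.
  intros Hin Hu1 Hu2 H1 H2. unfold step. apply in_flat_map. exists (xs, q). split; [exact Hin|].
  apply in_flat_map. exists u1. split; [apply in_seq; lia|].
  apply in_flat_map. exists u2. split; [apply in_seq; lia|].
  apply in_flat_map. exists (a1, r1). split; [exact H1|].
  apply in_map_iff. exists (a2, r2). auto.
Qed.

Definition supported (n : nat) (L : law (list Z)) : Prop :=
  forall xs r, In (xs, r) L -> length xs = n /\ Forall ternary xs /\ 0 <= r.

Lemma ternary_clamp (z : Z) : ternary (clamp z).
Proof. unfold ternary, clamp. lia. Qed.

Lemma rad_law_nonneg (p r : R) (z : Z) : 0 <= p <= 1 -> In (z, r) (rad_law p) -> 0 <= r.
Proof. intros Hp [E | [E | []]]; injection E as _ <-; lra. Qed.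

Lemma supported_step (p : R) (n : nat) (L : law (list Z)) : 0 <= p <= 1 -> (1 <= n)%nat ->
  supported n L -> supported (S n) (step p L).
Proof.
  intros Hp Hn HL ys r H.
  destruct (in_step_inv p L ys r H)
    as (xs & q & u1 & u2 & a1 & r1 & a2 & r2 & Hin & H1 & H2 & -> & ->).
  destruct (HL xs q Hin) as (Hl & Hxs & Hq).
  rewrite length_app. simpl. split; [lia|]. split.
  - apply Forall_app. split; [exact Hxs|]. constructor; [apply ternary_clamp | constructor].
  - assert (0 < INR (length xs)) by (apply lt_0_INR; lia).
    assert (0 <= / INR (length xs)) by (apply Rlt_le, Rinv_0_lt_compat; lra).
    pose proof (rad_law_nonneg p r1 a1 Hp H1). pose proof (rad_law_nonneg p r2 a2 Hp H2).
    repeat apply Rmult_le_pos; assumption.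
Qed.

Lemma walk_law_SS (p : R) (k : nat) :
  walk_law p (S (S (S k))) = step p (walk_law p (S (S k))).
Proof. reflexivity. Qed.

Lemma walk_law_supported (p : R) (k : nat) : 0 <= p <= 1 ->
  supported (S (S k)) (walk_law p (S (S k))).
Proof.
  intros Hp. induction k as [|k IH].
  - intros xs r H. simpl in H.
    destruct H as [E|[E|[E|[E|[]]]]]; injection E as <- <-;
      repeat split; try lra; repeat constructor; unfold ternary; lia.
  - rewrite walk_law_SS. apply supported_step; [exact Hp | lia | exact IH].
Qed.

Lemma walk_law_mass (p : R) (k : nat) : 0 <= p <= 1 ->
  expect (walk_law p (S (S k))) (fun _ => 1) = 1.
Proof.
  intros Hp. induction k as [|k IH]; [simpl; lra|].
  rewrite walk_law_SS, expect_step. etransitivity; [|exact IH]. apply expect_ext_in.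
  intros xs r Hin. destruct (walk_law_supported p k Hp xs r Hin) as (Hl & Hxs & _).
  rewrite step_kernel_ternary by (auto; lia).
  cbv beta. rewrite !Rmult_1_r. apply prob_sum.
Qed.

Lemma path_mean_opp (xs : list Z) : path_mean (map Z.opp xs) = - path_mean xs.
Proof.
  unfold path_mean, path_sum. rewrite length_map, lsum_map.
  rewrite (lsum_ext_in _ _ (fun x => -1 * IZR x)) by (intros; rewrite opp_IZR; ring).
  rewrite lsum_scal_l. unfold Rdiv. ring.
Qed.

Lemma path_density_opp (xs : list Z) : path_density (map Z.opp xs) = path_density xs.
Proof.
  unfold path_density, path_sqsum. rewrite length_map, lsum_map.
  f_equal. apply lsum_ext_in. intros. rewrite opp_IZR. ring.
Qed.

Lemma ternary_opp (xs : list Z) : Forall ternary xs -> Forall ternary (map Z.opp xs).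
Proof.
  intros H. apply Forall_map. eapply Forall_impl; [|exact H].
  unfold ternary. intros a Ha. lia.
Qed.

Lemma expect_walk_law_opp (p : R) (k : nat) (f : list Z -> R) : 0 <= p <= 1 ->
  expect (walk_law p (S (S k))) f = expect (walk_law p (S (S k))) (fun xs => f (map Z.opp xs)).
Proof.
  intros Hp. revert f. induction k as [|k IH]; intros f; [simpl; lra|].
  rewrite walk_law_SS, !expect_step, IH. apply expect_ext_in.
  intros xs r Hin. destruct (walk_law_supported p k Hp xs r Hin) as (Hl & Hxs & _).
  assert (Hl' : length (map Z.opp xs) = length xs) by apply length_map.
  rewrite !step_kernel_ternary by (auto using ternary_opp; lia).
  rewrite path_mean_opp, path_density_opp, prob_up_opp, prob_down_opp, prob_zero_opp.
  rewrite !map_app. simpl. ring.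
Qed.

Lemma expect_walk_law_Ssum (p : R) (k : nat) : 0 <= p <= 1 ->
  expect (walk_law p (S (S k))) Ssum = 0.
Proof.
  intros Hp. pose proof (expect_walk_law_opp p k Ssum Hp) as H.
  rewrite (expect_ext_in _ (fun xs => Ssum (map Z.opp xs)) (fun xs => -1 * Ssum xs)) in H.
  - rewrite expect_scal_l in H. lra.
  - intros xs _ _. rewrite !Ssum_path_sum. unfold path_sum.
    rewrite lsum_map, <- lsum_scal_l. apply lsum_ext_in. intros. rewrite opp_IZR. ring.
Qed.

Lemma walk_law_all_ones (p : R) (k : nat) : 0 < p < 1 ->
  exists r, 0 < r /\ In (repeat 1%Z (S (S k)), r) (walk_law p (S (S k))).
Proof.
  intros Hp. induction k as [|k [r [Hr Hin]]].
  - exists (1/4). split; [lra | now left].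
  - rewrite walk_law_SS.
    assert (Hp1 : In (1%Z, p) (rad_law p)) by now left.
    pose proof (in_step_intro p _ _ _ 0 0 1 1 p p Hin) as H.
    rewrite repeat_length in H. specialize (H ltac:(lia) ltac:(lia) Hp1 Hp1).
    replace (clamp _) with 1%Z in H by reflexivity.
    change [1%Z] with (repeat 1%Z 1) in H.
    rewrite <- repeat_app, Nat.add_1_r in H.
    eexists. split; [|exact H].
    assert (0 < / INR (S (S k))) by (apply Rinv_0_lt_compat, lt_0_INR; lia).
    repeat apply Rmult_lt_0_compat; lra.
Qed.

Section LyapunovParameters.
Variable q : R.

(* The density t of nonzero steps at which q (2 - t) = 1, i.e. the conditional drift
   q (2 - t) m of the next step equals the current mean m. *)
Definition t_star : R := 2 - / q.
Definition lyap_a : R := q ^ 2 / (t_star * (3 * t_star - 2)).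
Definition lyap_b : R := 2 / q.
Definition lyap_h (m t : R) : R := lyap_a * (m ^ 2 + lyap_b * (t - t_star) ^ 2).
Definition h_incr (m t n c : R) : R :=
  lyap_h (m + (c - m) / (n + 1)) (t + (c ^ 2 - t) / (n + 1)) - lyap_h m t.
Definition drift_const : R :=
  4 * lyap_a / q + lyap_a * (4 + lyap_b) + 2 * lyap_a * (8 + 6 * lyap_b).
Definition growth_coef (n : R) : R := 1 + 2 / n - drift_const / n ^ 2.

Hypothesis Hq : 3/4 < q < 1.

Lemma t_star_bounds : 2/3 < t_star < 1.
Proof.
  unfold t_star.
  assert (1 < / q < 4/3); [|lra].
  split; [rewrite <- Rinv_1 | rewrite <- (Rinv_inv (4/3))]; apply Rinv_lt_contravar; lra.
Qed.

Lemma lyap_a_pos : 0 < lyap_a.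
Proof. pose proof t_star_bounds. unfold lyap_a. apply Rdiv_lt_0_compat; nra. Qed.

Lemma lyap_b_bounds : 2 < lyap_b < 8/3.
Proof.
  unfold lyap_b. split; apply (Rmult_lt_reg_r q); try lra;
    unfold Rdiv; rewrite Rmult_assoc, Rinv_l; lra.
Qed.

Lemma drift_const_pos : 0 < drift_const.
Proof.
  pose proof lyap_a_pos. pose proof lyap_b_bounds.
  assert (0 < 4 * lyap_a / q) by (apply Rdiv_lt_0_compat; lra).
  unfold drift_const. nra.
Qed.

Lemma lyap_h_nonneg (m t : R) : 0 <= lyap_h m t.
Proof.
  pose proof lyap_a_pos. pose proof lyap_b_bounds.
  unfold lyap_h. apply Rmult_le_pos; [lra|].
  pose proof (pow2_ge_0 m). pose proof (pow2_ge_0 (t - t_star)). nra.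
Qed.

End LyapunovParameters.

Section Drift.
Variables q m t n : R.
Hypothesis Hq : 3/4 < q < 1.
Hypothesis Hn : 1 <= n.

Let e := / n.
Let e1 := / (n + 1).
Let a := lyap_a q.
Let b := lyap_b q.
Let x := t - t_star q.
Let pp := prob_up q m t.
Let pm := prob_down q m t.
Let p0 := prob_zero q m t.
Let G := 4 * a / q * x ^ 2 * (3/2 * (t + t_star q) - 1).
Let WW := pp * ((1 - m) ^ 2 + b * (1 - t) ^ 2) + pm * ((-1 - m) ^ 2 + b * (1 - t) ^ 2)
          + p0 * (m ^ 2 + b * t ^ 2).
Let beta := b * (1 - t) * (2 * x + e1 * (1 - t)).
Let K1 := 2 * (pp * (1 - m) + pm * (1 + m)) + e1 * (q * (2 - t) * (1 + m ^ 2) - 2 * (pp + pm))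
          + beta * q * (2 - t).

Lemma h_incr_eq (c : R) : h_incr q m t n c =
  a * e1 * ((c - m) * (2 * m + e1 * (c - m)) + b * (c ^ 2 - t) * (2 * x + e1 * (c ^ 2 - t))).
Proof. unfold h_incr, lyap_h, a, b, x, e1. field. lra. Qed.

(* Exact one-step drift of m^2 exp (- lyap_h).  lyap_a and lyap_b are tuned so that its
   1/n part is m^2 G / n with G >= 0; every other term is nonnegative or O(m^2 / n^2). *)
Lemma drift_identity :
  pp * (m + e) ^ 2 * (1 - h_incr q m t n 1) + pm * (m - e) ^ 2 * (1 - h_incr q m t n (-1))
  + p0 * m ^ 2 * (1 - h_incr q m t n 0) - (1 + 2 * e) * m ^ 2 =
  m ^ 2 * e * G + m ^ 2 * e * e1 * (4 * a / q) * x * (t - 3/2 * t ^ 2)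
  - m ^ 2 * a * e1 ^ 2 * WW - 2 * a * e * e1 * m ^ 2 * K1
  + e ^ 2 * (pp * (1 - h_incr q m t n 1) + pm * (1 - h_incr q m t n (-1))).
Proof.
  pose proof (t_star_bounds q Hq).
  rewrite !h_incr_eq.
  unfold WW, K1, beta, G, pp, pm, p0, prob_up, prob_down, prob_zero, x, e, e1, a, b,
    lyap_a, lyap_b.
  unfold t_star in *. field. repeat split; lra.
Qed.

Hypothesis Ht : 0 <= t <= 1.
Hypothesis Hm : - t <= m <= t.

Lemma step_sizes : 0 < e1 <= e /\ e <= 1 /\ e * e1 <= e ^ 2 /\ e1 ^ 2 <= e ^ 2.
Proof.
  unfold e, e1.
  assert (0 < / (n + 1)) by (apply Rinv_0_lt_compat; lra).
  assert (/ (n + 1) <= / n) by (apply Rinv_le_contravar; lra).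
  assert (/ n <= 1) by (rewrite <- Rinv_1; apply Rinv_le_contravar; lra).
  repeat split; nra.
Qed.

Lemma probs_nonneg : 0 <= pp /\ 0 <= pm /\ 0 <= p0.
Proof. apply prob_nonneg; lra. Qed.

Lemma G_nonneg : 0 <= G.
Proof.
  pose proof (t_star_bounds q Hq). pose proof (lyap_a_pos q Hq).
  assert (0 <= 4 * a / q) by (apply Rlt_le, Rdiv_lt_0_compat; unfold a; lra).
  unfold G. apply Rmult_le_pos; [apply Rmult_le_pos; [lra | apply pow2_ge_0] | lra].
Qed.

Lemma cross_term_ge :
  - (m ^ 2 * e ^ 2 * (4 * a / q)) <= m ^ 2 * e * e1 * (4 * a / q) * x * (t - 3/2 * t ^ 2).
Proof.
  pose proof (t_star_bounds q Hq). pose proof step_sizes as (He1 & He & He2 & He3).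
  assert (Hxd : -1 <= x * (t - 3/2 * t ^ 2)) by (unfold x; nra).
  assert (HK : 0 <= m ^ 2 * (4 * a / q)).
  { apply Rmult_le_pos; [apply pow2_ge_0|].
    apply Rlt_le, Rdiv_lt_0_compat; [pose proof (lyap_a_pos q Hq); unfold a|]; lra. }
  assert (0 <= e * e1 * (x * (t - 3/2 * t ^ 2) + 1)) by (apply Rmult_le_pos; nra).
  assert (- e ^ 2 <= e * e1 * (x * (t - 3/2 * t ^ 2))) by nra.
  replace (m ^ 2 * e * e1 * (4 * a / q) * x * (t - 3/2 * t ^ 2))
    with (m ^ 2 * (4 * a / q) * (e * e1 * (x * (t - 3/2 * t ^ 2)))) by ring.
  nra.
Qed.

Lemma WW_bounds : 0 <= WW <= 4 + b.
Proof.
  pose proof probs_nonneg as (H1 & H2 & H3).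
  pose proof (lyap_b_bounds q Hq) as Hb. fold b in Hb.
  assert (Hsum : pp + pm + p0 = 1) by apply prob_sum.
  assert (0 <= (1 - t) ^ 2 <= 1 /\ 0 <= t ^ 2 <= 1) by (split; split; nra).
  assert (0 <= (1 - m) ^ 2 <= 4 /\ 0 <= (-1 - m) ^ 2 <= 4 /\ m ^ 2 <= 4)
    by (repeat split; nra).
  assert (0 <= (1 - m) ^ 2 + b * (1 - t) ^ 2 <= 4 + b) by nra.
  assert (0 <= (-1 - m) ^ 2 + b * (1 - t) ^ 2 <= 4 + b) by nra.
  assert (0 <= m ^ 2 + b * t ^ 2 <= 4 + b) by nra.
  unfold WW. nra.
Qed.

Lemma quadratic_term_ge :
  - (m ^ 2 * e ^ 2 * (a * (4 + b))) <= - (m ^ 2 * a * e1 ^ 2 * WW).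
Proof.
  pose proof (lyap_a_pos q Hq). pose proof WW_bounds.
  pose proof step_sizes as (He1 & He & He2 & He3).
  assert (e1 ^ 2 * WW <= e ^ 2 * (4 + b)) by nra.
  assert (0 <= m ^ 2 * a) by (unfold a; nra).
  nra.
Qed.

Lemma K1_le : K1 <= 8 + 6 * b.
Proof.
  pose proof probs_nonneg as (H1 & H2 & H3). pose proof (lyap_b_bounds q Hq).
  assert (Hsum : pp + pm + p0 = 1) by apply prob_sum.
  pose proof step_sizes as (He1 & He & He2 & He3).
  assert (pp * (1 - m) + pm * (1 + m) <= 2) by nra.
  assert (0 <= q * (2 - t) <= 2) by nra.
  assert (0 <= q * (2 - t) * (1 + m ^ 2) <= 4) by nra.
  assert (e1 * (q * (2 - t) * (1 + m ^ 2) - 2 * (pp + pm)) <= 4) by nra.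
  assert (beta <= 2 * b).
  { pose proof (t_star_bounds q Hq). unfold beta, x.
    assert (2 * (t - t_star q) + e1 * (1 - t) <= 2) by nra.
    assert (0 <= b * (1 - t) <= b) by (unfold b in *; nra). nra. }
  unfold K1. unfold b in *. nra.
Qed.

Lemma mixed_term_ge :
  - (2 * a * e ^ 2 * m ^ 2 * (8 + 6 * b)) <= - (2 * a * e * e1 * m ^ 2 * K1).
Proof.
  pose proof (lyap_a_pos q Hq). pose proof K1_le. pose proof step_sizes as (He1 & He & He2 & He3).
  pose proof (lyap_b_bounds q Hq).
  assert (0 <= 2 * a * m ^ 2) by (unfold a; nra).
  assert (e * e1 * K1 <= e ^ 2 * (8 + 6 * b)).
  { destruct (Rle_dec 0 K1); [nra|]. assert (0 <= e * e1) by nra. unfold b in *. nra. }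
  nra.
Qed.

Lemma h_incr_le_1 (c : R) : c = 1 \/ c = -1 ->
  lyap_a q * (8 + 2 * lyap_b q) <= n + 1 -> h_incr q m t n c <= 1.
Proof.
  intros Hc Hlarge. rewrite h_incr_eq.
  pose proof (lyap_a_pos q Hq). pose proof (lyap_b_bounds q Hq).
  pose proof step_sizes as (He1 & He & He2 & He3). pose proof (t_star_bounds q Hq).
  assert (Hc2 : c ^ 2 = 1) by (destruct Hc; subst; ring).
  rewrite Hc2.
  assert ((c - m) * (2 * m + e1 * (c - m)) <= 8).
  { assert (- 2 <= c - m <= 2) by (destruct Hc; subst; lra).
    assert (- 4 <= 2 * m + e1 * (c - m) <= 4) by nra. nra. }
  assert (b * (1 - t) * (2 * x + e1 * (1 - t)) <= 2 * b).
  { unfold x. assert (- 3 <= 2 * (t - t_star q) + e1 * (1 - t) <= 2) by nra.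
    assert (0 <= b * (1 - t) <= b) by (unfold b in *; nra). nra. }
  assert (e1 * (a * (8 + 2 * b)) <= 1).
  { unfold e1. apply (Rmult_le_reg_l (n + 1)); [lra|].
    rewrite <- Rmult_assoc, Rinv_r by lra. unfold a, b. lra. }
  assert (0 <= a * e1) by (unfold a in *; nra).
  nra.
Qed.

Lemma drift_bound : lyap_a q * (8 + 2 * lyap_b q) <= n + 1 ->
  growth_coef q n * m ^ 2 <=
  prob_up q m t * (m + / n) ^ 2 * (1 - h_incr q m t n 1)
  + prob_down q m t * (m - / n) ^ 2 * (1 - h_incr q m t n (-1))
  + prob_zero q m t * m ^ 2 * (1 - h_incr q m t n 0).
Proof.
  intros Hlarge.
  pose proof drift_identity. pose proof G_nonneg. pose proof cross_term_ge.
  pose proof quadratic_term_ge. pose proof mixed_term_ge.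
  pose proof (h_incr_le_1 1 (or_introl eq_refl) Hlarge).
  pose proof (h_incr_le_1 (-1) (or_intror eq_refl) Hlarge).
  pose proof probs_nonneg as (P1 & P2 & P3). pose proof step_sizes as (He1 & He & He2 & He3).
  assert (0 <= m ^ 2 * e * G) by (apply Rmult_le_pos; [nra | assumption]).
  assert (0 <= e ^ 2 * (pp * (1 - h_incr q m t n 1) + pm * (1 - h_incr q m t n (-1))))
    by (apply Rmult_le_pos; nra).
  assert (Ecoef : growth_coef q n = 1 + 2 * e - drift_const q * e ^ 2)
    by (unfold growth_coef, e; field; lra).
  rewrite Ecoef. unfold drift_const. fold a b.
  unfold e, pp, pm, p0 in *. lra.
Qed.

End Drift.

Definition lyap (p : R) (xs : list Z) : R :=
  path_sum xs ^ 2 * exp (- lyap_h (bias p) (path_mean xs) (path_density xs)).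

Lemma lyap_nonneg (p : R) (xs : list Z) : 0 <= lyap p xs.
Proof. unfold lyap. apply Rmult_le_pos; [apply pow2_ge_0 | apply Rlt_le, exp_pos]. Qed.

Lemma lyap_le_sq (p : R) (xs : list Z) : 7/8 < p < 1 -> lyap p xs <= path_sum xs ^ 2.
Proof.
  intros Hp. unfold lyap.
  set (h := lyap_h (bias p) (path_mean xs) (path_density xs)).
  assert (0 <= h) by (apply lyap_h_nonneg; unfold bias; lra).
  assert (exp (- h) <= 1).
  { destruct (Req_dec h 0) as [-> | Hh]; [rewrite Ropp_0, exp_0; lra|].
    rewrite <- exp_0. apply Rlt_le, exp_increasing. lra. }
  pose proof (pow2_ge_0 (path_sum xs)). nra.
Qed.

Lemma lyap_snoc_ge (p : R) (xs : list Z) (c : Z) : (1 <= length xs)%nat ->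
  INR (length xs) ^ 2 * exp (- lyap_h (bias p) (path_mean xs) (path_density xs)) *
  ((path_mean xs + IZR c / INR (length xs)) ^ 2 *
   (1 - h_incr (bias p) (path_mean xs) (path_density xs) (INR (length xs)) (IZR c)))
  <= lyap p (xs ++ [c]).
Proof.
  intros Hl. assert (HN : 0 < INR (length xs)) by (apply lt_0_INR; lia).
  unfold lyap. rewrite path_sum_snoc, path_mean_snoc, path_density_snoc by exact Hl.
  assert (Es : (path_sum xs + IZR c) ^ 2 =
               INR (length xs) ^ 2 * (path_mean xs + IZR c / INR (length xs)) ^ 2)
    by (unfold path_mean; field; lra).
  rewrite Es.
  set (m := path_mean xs) in *. set (t := path_density xs). set (N := INR (length xs)) in *.
  set (h := lyap_h (bias p) m t). set (d := h_incr (bias p) m t N (IZR c)).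
  replace (lyap_h (bias p) (m + (IZR c - m) / (N + 1)) (t + (IZR c ^ 2 - t) / (N + 1)))
    with (h + d) by (unfold d, h, h_incr; ring).
  rewrite Ropp_plus_distr, exp_plus.
  pose proof (exp_ineq1_le (- d)).
  assert (0 <= N ^ 2 * exp (- h) * (m + IZR c / N) ^ 2)
    by (apply Rmult_le_pos; [apply Rmult_le_pos; [apply pow2_ge_0 | apply Rlt_le, exp_pos]
                            | apply pow2_ge_0]).
  replace (N ^ 2 * (m + IZR c / N) ^ 2 * (exp (- h) * exp (- d)))
    with (N ^ 2 * exp (- h) * (m + IZR c / N) ^ 2 * exp (- d)) by ring.
  rewrite <- Rmult_assoc. apply Rmult_le_compat_l; lra.
Qed.

Lemma lyap_drift (p : R) (xs : list Z) :
  7/8 < p < 1 -> Forall ternary xs -> (1 <= length xs)%nat ->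
  lyap_a (bias p) * (8 + 2 * lyap_b (bias p)) <= INR (length xs) + 1 ->
  growth_coef (bias p) (INR (length xs)) * lyap p xs <= step_kernel p (lyap p) xs.
Proof.
  intros Hp Hxs Hl Hlarge.
  assert (Hq : 3/4 < bias p < 1) by (unfold bias; lra).
  assert (HN : 1 <= INR (length xs)) by (apply (le_INR 1); exact Hl).
  destruct (path_stats_bounds xs Hxs Hl) as [Ht Hm].
  pose proof (drift_bound _ _ _ _ Hq HN Ht Hm Hlarge) as Hd.
  pose proof (prob_nonneg (bias p) (path_mean xs) (path_density xs)) as (P1 & P2 & P3);
    try lra.
  pose proof (lyap_snoc_ge p xs 1 Hl) as L1.
  pose proof (lyap_snoc_ge p xs (-1) Hl) as L2.
  pose proof (lyap_snoc_ge p xs 0 Hl) as L3.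
  rewrite step_kernel_ternary by assumption.
  assert (Elyap : lyap p xs = INR (length xs) ^ 2 *
            exp (- lyap_h (bias p) (path_mean xs) (path_density xs)) * path_mean xs ^ 2)
    by (unfold lyap, path_mean; field; lra).
  rewrite Elyap.
  set (m := path_mean xs) in *. set (t := path_density xs) in *.
  set (N := INR (length xs)) in *.
  set (K := N ^ 2 * exp (- lyap_h (bias p) m t)) in *.
  assert (HK : 0 <= K) by (apply Rmult_le_pos; [apply pow2_ge_0 | apply Rlt_le, exp_pos]).
  replace (m + 1 / N) with (m + / N) in L1 by (field; lra).
  replace (m + -1 / N) with (m - / N) in L2 by (field; lra).
  replace (m + 0 / N) with m in L3 by (field; lra).
  apply Rmult_le_compat_l with (r := prob_up (bias p) m t) in L1; [|exact P1].
  apply Rmult_le_compat_l with (r := prob_down (bias p) m t) in L2; [|exact P2].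
  apply Rmult_le_compat_l with (r := prob_zero (bias p) m t) in L3; [|exact P3].
  apply Rmult_le_compat_l with (r := K) in Hd; [|exact HK].
  lra.
Qed.

Lemma expect_lyap_step (p : R) (k : nat) : 7/8 < p < 1 ->
  lyap_a (bias p) * (8 + 2 * lyap_b (bias p)) <= INR k + 3 ->
  growth_coef (bias p) (INR k + 2) * expect (walk_law p (S (S k))) (lyap p)
  <= expect (walk_law p (S (S (S k)))) (lyap p).
Proof.
  intros Hp Hlarge. rewrite walk_law_SS, expect_step, <- expect_scal_l.
  apply expect_le_in. intros xs r Hin.
  destruct (walk_law_supported p k ltac:(lra) xs r Hin) as (Hl & Hxs & Hr).
  split; [exact Hr|].
  assert (EN : INR (length xs) = INR k + 2) by (rewrite Hl, !S_INR; ring).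
  rewrite <- EN. apply lyap_drift; [exact Hp | exact Hxs | lia | lra].
Qed.

Lemma growth_coef_nonneg (q y : R) : 0 < drift_const q <= y -> 1 <= y ->
  0 <= growth_coef q y.
Proof.
  intros HC Hy. unfold growth_coef.
  replace (1 + 2 / y - drift_const q / y ^ 2) with (1 + (2 * y - drift_const q) / y ^ 2)
    by (field; lra).
  assert (0 <= (2 * y - drift_const q) / y ^ 2)
    by (apply Rmult_le_pos; [|apply Rlt_le, Rinv_0_lt_compat]; nra).
  lra.
Qed.

Lemma growth_coef_quadratic (q y : R) : 0 < drift_const q <= y -> 1 <= y ->
  (y + 1 + drift_const q) * (y + 2 + drift_const q)
  <= growth_coef q y * ((y + drift_const q) * (y + 1 + drift_const q)).
Proof.
  intros HC Hy. unfold growth_coef. set (C := drift_const q) in *.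
  assert (E : (1 + 2 / y - C / y ^ 2) * ((y + C) * (y + 1 + C)) - (y + 1 + C) * (y + 2 + C)
              = (y + C + 1) * C * (y - C) / y ^ 2) by (field; lra).
  assert (0 <= (y + C + 1) * C * (y - C) / y ^ 2)
    by (apply Rmult_le_pos; [repeat apply Rmult_le_pos | apply Rlt_le, Rinv_0_lt_compat]; nra).
  lra.
Qed.

Lemma ratio_nondecreasing (a f c : nat -> R) (K : nat) : 0 <= a K -> 0 <= f K ->
  (forall k, (K <= k)%nat -> 0 <= c k /\ c k * a k <= a (S k) /\ f (S k) <= c k * f k) ->
  forall k, (K <= k)%nat -> a K * f k <= a k * f K.
Proof.
  intros HaK HfK Hstep k Hk. induction Hk as [|k Hk IH]; [lra|].
  destruct (Hstep k Hk) as (Hc & Ha & Hf).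
  apply Rle_trans with (c k * (a K * f k)); [nra|].
  apply Rle_trans with (c k * (a k * f K)); [nra|].
  nra.
Qed.

Lemma path_sum_repeat_one (n : nat) : path_sum (repeat 1%Z n) = INR n.
Proof.
  unfold path_sum. induction n as [|n IH]; [reflexivity|].
  cbn [repeat lsum]. rewrite IH, S_INR. ring.
Qed.

Lemma expect_lyap_pos (p : R) (k : nat) : 7/8 < p < 1 ->
  0 < expect (walk_law p (S (S k))) (lyap p).
Proof.
  intros Hp. destruct (walk_law_all_ones p k ltac:(lra)) as [r [Hr Hin]].
  assert (Hpos : 0 < lyap p (repeat 1%Z (S (S k)))).
  { unfold lyap. apply Rmult_lt_0_compat; [|apply exp_pos].
    rewrite path_sum_repeat_one. apply pow_lt, lt_0_INR. lia. }
  assert (r * lyap p (repeat 1%Z (S (S k))) <= expect (walk_law p (S (S k))) (lyap p)).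
  { apply expect_ge_atom; [exact Hin|]. intros xs s Hs.
    destruct (walk_law_supported p k ltac:(lra) xs s Hs) as (_ & _ & Hs0).
    split; [exact Hs0 | apply lyap_nonneg]. }
  nra.
Qed.

Lemma VarS_walk_law (p : R) (k : nat) : 0 <= p <= 1 ->
  VarS p (S (S k)) = expect (walk_law p (S (S k))) (fun xs => Ssum xs ^ 2).
Proof. intros Hp. unfold VarS. rewrite expect_walk_law_Ssum by exact Hp. ring. Qed.

Lemma expect_Ssum_sq_le (p : R) (k : nat) : 0 <= p <= 1 ->
  expect (walk_law p (S (S k))) (fun xs => Ssum xs ^ 2) <= INR (S (S k)) ^ 2.
Proof.
  intros Hp.
  rewrite <- (Rmult_1_r (INR (S (S k)) ^ 2)), <- (walk_law_mass p k Hp), <- expect_scal_l.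
  apply expect_le_in. intros xs r Hin.
  destruct (walk_law_supported p k Hp xs r Hin) as (Hl & Hxs & Hr).
  split; [exact Hr|]. rewrite Ssum_path_sum, <- Hl.
  destruct (ternary_bounds xs Hxs). nra.
Qed.

Lemma expect_lyap_le_Ssum_sq (p : R) (k : nat) : 7/8 < p < 1 ->
  expect (walk_law p (S (S k))) (lyap p) <= expect (walk_law p (S (S k))) (fun xs => Ssum xs ^ 2).
Proof.
  intros Hp. apply expect_le_in. intros xs r Hin.
  destruct (walk_law_supported p k ltac:(lra) xs r Hin) as (_ & _ & Hr).
  split; [exact Hr|]. rewrite Ssum_path_sum. now apply lyap_le_sq.
Qed.

Lemma expect_lyap_ge_quadratic (p : R) (K : nat) : 7/8 < p < 1 ->
  drift_const (bias p) <= INR K + 2 ->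
  lyap_a (bias p) * (8 + 2 * lyap_b (bias p)) <= INR K + 3 ->
  forall k, (K <= k)%nat ->
  expect (walk_law p (S (S K))) (lyap p) /
    ((INR K + 2 + drift_const (bias p)) * (INR K + 3 + drift_const (bias p)))
    * INR (S (S k)) ^ 2
  <= expect (walk_law p (S (S k))) (lyap p).
Proof.
  intros Hp HC Hlarge k Hk.
  assert (Hq : 3/4 < bias p < 1) by (unfold bias; lra).
  pose proof (drift_const_pos _ Hq). pose proof (pos_INR K). pose proof (pos_INR k).
  set (C := drift_const (bias p)) in *.
  set (a := fun j => expect (walk_law p (S (S j))) (lyap p)).
  set (f := fun j => (INR j + 2 + C) * (INR j + 3 + C)).
  assert (Hratio : a K * f k <= a k * f K).
  { apply (ratio_nondecreasing a f (fun j => growth_coef (bias p) (INR j + 2)) K);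
      [| | |exact Hk].
    - apply Rlt_le, expect_lyap_pos, Hp.
    - unfold f. nra.
    - intros j Hj. pose proof (le_INR _ _ Hj).
      unfold a, f. rewrite S_INR.
      split; [apply growth_coef_nonneg; fold C; lra|].
      split; [apply expect_lyap_step; [exact Hp | lra]|].
      replace (INR j + 1 + 2 + C) with (INR j + 2 + 1 + C) by ring.
      replace (INR j + 1 + 3 + C) with (INR j + 2 + 2 + C) by ring.
      replace (INR j + 3 + C) with (INR j + 2 + 1 + C) by ring.
      apply growth_coef_quadratic; fold C; lra. }
  assert (HaK : 0 < a K) by apply expect_lyap_pos, Hp.
  assert (HfK : 0 < f K) by (unfold f; nra).
  assert (Hn : INR (S (S k)) ^ 2 <= f k) by (rewrite !S_INR; unfold f; nra).
  change (a K / f K * INR (S (S k)) ^ 2 <= a k).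
  apply Rmult_le_reg_r with (f K); [exact HfK|].
  replace (a K / f K * INR (S (S k)) ^ 2 * f K) with (a K * INR (S (S k)) ^ 2) by (field; lra).
  nra.
Qed.

Theorem corollary2p2 (p : R) (hp : 7/8 < p < 1) :
  exists (c C : R) (N : nat),
    0 < c /\ 0 < C /\
    forall n : nat, (N <= n)%nat ->
      c * INR n ^ 2 <= VarS p n <= C * INR n ^ 2.
Proof.
  assert (Hq : 3/4 < bias p < 1) by (unfold bias; lra).
  pose proof (drift_const_pos _ Hq).
  set (C := drift_const (bias p)) in *.
  set (A := lyap_a (bias p) * (8 + 2 * lyap_b (bias p))).
  destruct (INR_archimed 1 (Rmax C A) Rlt_0_1) as [K HK]. rewrite Rmult_1_r in HK.
  pose proof (Rmax_l C A). pose proof (Rmax_r C A). pose proof (pos_INR K).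
  pose proof (expect_lyap_pos p K hp).
  exists (expect (walk_law p (S (S K))) (lyap p) / ((INR K + 2 + C) * (INR K + 3 + C))), 1,
    (S (S K)).
  split; [apply Rdiv_lt_0_compat; nra|]. split; [lra|].
  intros [|[|k]] Hk; [lia | lia|].
  rewrite VarS_walk_law by lra. split.
  - eapply Rle_trans;
      [apply expect_lyap_ge_quadratic; [exact hp | fold C; lra | fold A; lra | lia]|].
    apply expect_lyap_le_Ssum_sq, hp.
  - rewrite Rmult_1_l. apply expect_Ssum_sq_le. lra.
Qed.
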